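(* For every $n\ge 2$ and every Greene–Kleitman chain $C$ in $Q_n$ with $|C|\ge 2$, the chains $\ell( *C* )$ and $\ell( *f(C)* )$ are connected at their bottom ends in $Q_{n+2}$. Specifically, if $|C|=2$ and $C=u*v*w$ with $u,v,w\in D$, then $\ell( *C* )=*\,u\,*\,v\,0\,w\,1$ and $\ell( *f(C)* )=0\,u\,0\,v\,1\,w\,1$; and if $|C|\ge 3$ and $C=C'*u$ with $u\in D$ and $C'$ containing at least two $*$s, then $\ell( *C* )=*\,C'\,0\,u\,1$ and $\ell( *f(C)* )=*\,f(C')\,0\,u\,1$. Consequently, in the first case the chains $\ell( *C* )$ and $\ell( *f(C)* )$ differ in exactly three positions, and in the second case they differ in exactly two positions.
   Context: $Q_n$ is the hypercube on $\{0,1\}^n$. Let $D$ be the set of bitstrings (including the empty string) with equally many $0$s and $1$s such that every prefix has at least as many $0$s as $1$s. A Greene–Kleitman chain in $Q_n$ is a string of length $n$ over $\{0,1,*\}$ of the form $u_0*u_1*\cdots*u_{h-1}*u_h$ with all $u_j\in D$, representing the path whose vertices are obtained by replacing the $*$s by $i$ ones followed by $h-i$ zeros; $|C|=h$ is its number of $*$s, and its bottom end $b(C)$ is obtained by replacing all $*$s by $0$. For a string $C$ over $\{0,1,*\}$ with at least two $*$s, $f(C)$ (resp. $\ell(C)$) is obtained by replacing the first two (resp. last two) $*$s by $0$ and $1$, respectively. Juxtaposition denotes concatenation. Two chains are connected at their bottom ends if their bottom ends differ in exactly one position. *)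

From HB Require Import structures.
From mathcomp Require Import all_boot.
Set Implicit Arguments. Unset Strict Implicit. Unset Printing Implicit Defensive.

Inductive sym := S0 | S1 | Star.

Definition sym_eqb (a b : sym) : bool :=
  match a, b with
  | S0, S0 | S1, S1 | Star, Star => true
  | _, _ => false
  end.

Lemma sym_eqP : Equality.axiom sym_eqb.
Proof. by case; case; constructor. Qed.

HB.instance Definition _ := hasDecEq.Build sym sym_eqP.

Definition word := seq sym.

Definition n0 (s : word) := count (pred1 S0) s.
Definition n1 (s : word) := count (pred1 S1) s.
(* |C| : number of stars *)
Definition nstars (s : word) := count (pred1 Star) s.

Definition inD (s : word) : bool :=
  [&& all (fun c => c != Star) s, n0 s == n1 s &
      all (fun i => n1 (take i s) <= n0 (take i s)) (iota 0 (size s).+1)].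

Fixpoint star_join (u0 : word) (us : seq word) : word :=
  match us with
  | [::] => u0
  | u :: us' => u0 ++ Star :: star_join u us'
  end.

Definition GKchain (n : nat) (C : word) : Prop :=
  size C = n /\
  exists (u0 : word) (us : seq word),
    all inD (u0 :: us) /\ C = star_join u0 us.

Definition bottom (C : word) : word :=
  map (fun c => if c == Star then S0 else c) C.

Fixpoint repl_first_star (c : sym) (s : word) : word :=
  match s with
  | [::] => [::]
  | x :: s' => if x == Star then c :: s' else x :: repl_first_star c s'
  end.

Definition fC (C : word) : word := repl_first_star S1 (repl_first_star S0 C).

(* l(C): last two *s replaced by 0 and 1 respectively *)
Definition lC (C : word) : word :=
  rev (repl_first_star S0 (repl_first_star S1 (rev C))).

Definition hamming (s t : word) : nat := count (fun p => p.1 != p.2) (zip s t).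

Definition connected_bottom (C1 C2 : word) : Prop :=
  size C1 = size C2 /\ hamming (bottom C1) (bottom C2) = 1.

Definition starwrap (C : word) : word := Star :: rcons C Star.

From mathcomp Require Import all_boot.

(* The closing star of *X* is always the last of its stars, so l(*X*) turns the
   last star of X into 0 and closes with 1; when X has no star, the opening star
   becomes 0 instead.  Either way b(l(*X*)) = 0 b(X) 1.  Since f replaces the
   first star by 0, which is also what b does, b(f(C)) differs from b(C) only at
   the second star of C, whence the bottom ends are adjacent. *)

Lemma inD_nostar u : inD u -> Star \notin u.
Proof.
case/and3P => + _ _; elim: u => //= x u IH /andP[xNstar /IH].
by rewrite in_cons negb_or eq_sym xNstar.
Qed.

Lemma nstars_gt0 s : (0 < nstars s) = (Star \in s).
Proof. by rewrite -has_count has_pred1. Qed.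

Lemma size_repl c s : size (repl_first_star c s) = size s.
Proof. by elim: s => //= x s IH; case: ifP => //= _; rewrite IH. Qed.

Lemma size_fC s : size (fC s) = size s.
Proof. by rewrite /fC !size_repl. Qed.

Lemma nstars_repl c s : c != Star -> nstars (repl_first_star c s) = (nstars s).-1.
Proof.
move=> cNstar; elim: s => //= x s IH.
by case: x => /=; rewrite /nstars /= ?(negbTE cNstar) -?/(nstars _) ?IH.
Qed.

Lemma repl_cat_nostar c s t :
  Star \notin s -> repl_first_star c (s ++ t) = s ++ repl_first_star c t.
Proof. by elim: s => //= x s IH; case: x => //=; rewrite in_cons /= => /IH ->. Qed.

Lemma repl_cat_star c s t :
  Star \in s -> repl_first_star c (s ++ t) = repl_first_star c s ++ t.
Proof. by elim: s => //= x s IH; case: x => //=; rewrite in_cons /= => /IH ->. Qed.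

Lemma fC_cat s t : 2 <= nstars s -> fC (s ++ t) = fC s ++ t.
Proof.
move=> s_stars; rewrite /fC !repl_cat_star // -nstars_gt0 ?nstars_repl //.
- by rewrite -subn1 subn_gt0.
- exact: ltnW.
Qed.

Lemma lC_starwrap_nostar s : Star \notin s -> lC (starwrap s) = S0 :: s ++ [:: S1].
Proof.
move=> sNstar; rewrite /lC /starwrap rev_cons rev_rcons /=.
by rewrite -cats1 repl_cat_nostar ?mem_rev //= rev_cons rev_cat revK -cats1.
Qed.

Lemma lC_starwrap_cat s t :
  Star \notin t -> lC (starwrap (s ++ Star :: t)) = Star :: s ++ S0 :: t ++ [:: S1].
Proof.
move=> tNstar; rewrite /lC /starwrap rev_cons rev_rcons /= rev_cat !rev_cons.
rewrite cat_rcons rcons_cat repl_cat_nostar ?mem_rev //=.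
by rewrite rev_cat rev_cons rev_rcons !revK cat_rcons -cats1 -!catA.
Qed.

Lemma size_lC_starwrap s : size (lC (starwrap s)) = (size s).+2.
Proof. by rewrite /lC size_rev !size_repl size_rev /starwrap /= size_rcons. Qed.

Lemma bottom_repl0 s : bottom (repl_first_star S0 s) = bottom s.
Proof. by elim: s => //= x s IH; case: x => //=; rewrite IH. Qed.

Lemma bottom_lC_starwrap s : bottom (lC (starwrap s)) = S0 :: bottom s ++ [:: S1].
Proof.
rewrite /lC /starwrap rev_cons rev_rcons /= {1}/bottom map_rev /= -/(bottom _).
by rewrite bottom_repl0 /bottom map_rcons map_rev rev_cons rev_rcons revK cats1.
Qed.

Lemma hamming_cons x y s t : hamming (x :: s) (y :: t) = (x != y) + hamming s t.
Proof. by []. Qed.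

Lemma hamming_cat s1 s2 t1 t2 : size s1 = size t1 ->
  hamming (s1 ++ s2) (t1 ++ t2) = hamming s1 t1 + hamming s2 t2.
Proof. by move=> eq_size; rewrite /hamming zip_cat // count_cat. Qed.

Lemma hamming_refl s : hamming s s = 0.
Proof. by elim: s => //= x s IH; rewrite hamming_cons eqxx. Qed.

Lemma hamming_repl c s : c != Star -> hamming s (repl_first_star c s) = (Star \in s).
Proof.
move=> cNstar; elim: s => //= x s IH; rewrite in_cons.
by case: x => /=; rewrite hamming_cons ?IH // hamming_refl eq_sym cNstar.
Qed.

Lemma hamming_bottom_repl1 s :
  hamming (bottom s) (bottom (repl_first_star S1 s)) = (Star \in s).
Proof.
by elim: s => //= x s IH; rewrite in_cons; case: x; rewrite /= hamming_cons ?hamming_refl.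
Qed.

Lemma hamming_fC s : 2 <= nstars s -> hamming s (fC s) = 2.
Proof.
rewrite /fC; elim: s => //= x s IH.
case: x; rewrite /= hamming_cons /= ?add0n // add1n ltnS => s_stars.
by rewrite hamming_repl // -nstars_gt0 s_stars.
Qed.

Lemma hamming_bottom_fC s : 2 <= nstars s -> hamming (bottom s) (bottom (fC s)) = 1.
Proof.
move=> s_stars; rewrite /fC -(bottom_repl0 s) hamming_bottom_repl1 -nstars_gt0.
by rewrite nstars_repl // -subn1 subn_gt0 s_stars.
Qed.

Theorem lemma20 (n : nat) (C : word) :
  2 <= n -> GKchain n C -> 2 <= nstars C ->
  [/\ size (lC (starwrap C)) = n.+2,
      size (lC (starwrap (fC C))) = n.+2,
      connected_bottom (lC (starwrap C)) (lC (starwrap (fC C))),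
      (nstars C = 2 ->
        forall u v w : word, inD u -> inD v -> inD w ->
          C = u ++ Star :: v ++ Star :: w ->
          [/\ lC (starwrap C) = Star :: u ++ Star :: v ++ S0 :: w ++ [:: S1],
              lC (starwrap (fC C)) = S0 :: u ++ S0 :: v ++ S1 :: w ++ [:: S1]
            & hamming (lC (starwrap C)) (lC (starwrap (fC C))) = 3])
    & (3 <= nstars C ->
        forall (C' u : word), inD u -> 2 <= nstars C' ->
          C = C' ++ Star :: u ->
          [/\ lC (starwrap C) = Star :: C' ++ S0 :: u ++ [:: S1],
              lC (starwrap (fC C)) = Star :: fC C' ++ S0 :: u ++ [:: S1]
            & hamming (lC (starwrap C)) (lC (starwrap (fC C))) = 2])].
Proof.
move=> _ [sizeC _] C_stars; split.
- by rewrite size_lC_starwrap sizeC.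
- by rewrite size_lC_starwrap size_fC sizeC.
- split; first by rewrite !size_lC_starwrap size_fC.
  rewrite !bottom_lC_starwrap hamming_cons hamming_cat ?size_map ?size_fC //.
  by rewrite hamming_bottom_fC // hamming_refl.
- move=> _ u v w /inD_nostar uNstar /inD_nostar vNstar /inD_nostar wNstar ->.
  have -> : fC (u ++ Star :: v ++ Star :: w) = u ++ S0 :: v ++ S1 :: w.
    by rewrite /fC !repl_cat_nostar //= repl_cat_nostar.
  rewrite (catA u (Star :: v)) lC_starwrap_cat // -catA.
  rewrite lC_starwrap_nostar; last first.
    by rewrite !(mem_cat, in_cons) /= !negb_or uNstar vNstar wNstar.
  rewrite -!catA /= -!catA; split => //.
  by rewrite hamming_cons hamming_cat // hamming_cons hamming_cat // hamming_cons !hamming_refl.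
- move=> _ C' u /inD_nostar uNstar C'_stars ->.
  rewrite fC_cat // !lC_starwrap_cat //; split => //.
  by rewrite hamming_cons hamming_cat ?size_fC // hamming_fC // hamming_refl.
Qed.
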